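(* If $G$ is a bipartite $\epsilon$-expander with $2n$ vertices, then every separator in $G$ has size at least $\frac{\epsilon}{2}(n-1)-1$.
   Context: For $\epsilon\in(0,1]$, a bipartite graph $G$ with bipartition $A,B$ is a bipartite $\epsilon$-expander if $|A|=|B|$ and $|N(S)|\geq(1+\epsilon)|S|$ for every $S\subset A$ with $|S|\leq|A|/2$, where $N(S)$ is the set of vertices adjacent to some vertex of $S$. A separator in a graph $G$ is a set $Z\subseteq V(G)$ such that each component of $G-Z$ has at most $|V(G)|/2$ vertices. *)

From HB Require Import structures.
From mathcomp Require Import all_boot all_order all_algebra.
Set Implicit Arguments. Unset Strict Implicit. Unset Printing Implicit Defensive.
Import Order.TTheory GRing.Theory Num.Theory.

Definition simple_graph (T : finType) (e : rel T) : Prop :=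
  symmetric e /\ irreflexive e.

Definition bipartition (T : finType) (e : rel T) (A B : {set T}) : Prop :=
  [/\ A :&: B = set0, A :|: B = [set: T] &
      forall x y, e x y -> (x \in A) && (y \in B) || (x \in B) && (y \in A)].

Definition nbhd (T : finType) (e : rel T) (S : {set T}) : {set T} :=
  [set y | [exists x in S, e x y]].

Definition bip_expander (R : realFieldType) (eps : R)
    (T : finType) (e : rel T) (A B : {set T}) : Prop :=
  [/\ bipartition e A B, #|A| = #|B| &
      forall S : {set T}, S \subset A -> (#|S|%:R <= #|A|%:R / 2 :> R)%R ->
        ((1 + eps) * #|S|%:R <= #|nbhd e S|%:R)%R].

Definition del_rel (T : finType) (e : rel T) (Z : {set T}) : rel T :=
  fun x y => [&& e x y, x \notin Z & y \notin Z].

Definition component (T : finType) (e : rel T) (Z : {set T}) (x : T) : {set T} :=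
  [set y | connect (del_rel e Z) x y].

Definition separator (T : finType) (e : rel T) (Z : {set T}) : Prop :=
  forall x, x \notin Z -> (#|component e Z x|).*2 <= #|T|.

From mathcomp Require Import all_boot all_order all_algebra.
From mathcomp Require Import zify lra.
Import Order.TTheory GRing.Theory Num.Theory.
Set Implicit Arguments. Unset Strict Implicit.

(* Call a set of vertices closed if it is a union of components of G - Z. If
   X is closed, every neighbour of a vertex of X lies in X or in Z, so the
   expansion of G applied inside X :&: A forces
   (1 + eps) #|S| <= #|X :&: B| + #|Z :&: B| for S in X :&: A of size at most
   n/2. Taking a maximal closed set with at most n/2 vertices in A, one either
   cuts G - Z into at most three closed pieces with at most n/2 vertices in A
   each, and summing the inequality over the pieces gives eps n <= 2 #|Z|; or
   G - Z has a component C with more than n/2 vertices in A, and then #|C| <= n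
   leaves C at most n/2 vertices in B, so expanding n/2 vertices of C :&: A
   gives eps n/2 <= #|Z :&: B| up to rounding. *)

Section ClosedSets.

Variables (T : finType) (e : rel T) (Z : {set T}).

Definition comp_closed (P : {set T}) : bool :=
  (P \subset ~: Z) &&
  [forall x, forall y, del_rel e Z x y ==> ((x \in P) == (y \in P))].

Lemma comp_closedP (P : {set T}) :
  reflect (P \subset ~: Z /\ closed (del_rel e Z) P) (comp_closed P).
Proof.
apply: (iffP andP) => -[PZ clP]; split=> //.
  by move=> x y exy; move/forallP/(_ x)/forallP/(_ y)/implyP/(_ exy)/eqP: clP.
by apply/forallP=> x; apply/forallP=> y; apply/implyP=> /clP ->.
Qed.

Lemma comp_closed0 : comp_closed set0.
Proof.
by apply/comp_closedP; rewrite sub0set; split=> // x y; rewrite !inE.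
Qed.

Lemma comp_closedCZ : comp_closed (~: Z).
Proof.
by apply/comp_closedP; split=> // x y /and3P[_ xZ yZ]; rewrite !inE xZ yZ.
Qed.

Lemma comp_closedU (P Q : {set T}) :
  comp_closed P -> comp_closed Q -> comp_closed (P :|: Q).
Proof.
move=> /comp_closedP[PZ clP] /comp_closedP[QZ clQ].
apply/comp_closedP; rewrite subUset PZ QZ; split=> // x y exy.
by rewrite !inE (clP _ _ exy) (clQ _ _ exy).
Qed.

Lemma comp_closedD (P Q : {set T}) :
  comp_closed P -> comp_closed Q -> comp_closed (P :\: Q).
Proof.
move=> /comp_closedP[PZ clP] /comp_closedP[_ clQ].
apply/comp_closedP; split; first exact: subset_trans (subsetDl P Q) PZ.
by move=> x y exy; rewrite !inE (clP _ _ exy) (clQ _ _ exy).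
Qed.

Hypothesis sym_e : symmetric e.

Lemma del_rel_sym : symmetric (del_rel e Z).
Proof.
by move=> x y; rewrite /del_rel sym_e; case: (x \in Z); case: (y \in Z).
Qed.

Let connect_sym_del : connect_sym (del_rel e Z).
Proof. exact/sym_connect_sym/del_rel_sym. Qed.

Lemma component_sub_closed (P : {set T}) x :
  comp_closed P -> x \in P -> component e Z x \subset P.
Proof.
move=> /comp_closedP[_ clP] xP; apply/subsetP=> y; rewrite inE => cxy.
by rewrite -(closed_connect clP cxy).
Qed.

Lemma comp_closed_component x : x \notin Z -> comp_closed (component e Z x).
Proof.
move=> xZ; apply/comp_closedP; split; last first.
  by move=> y z /(connect_closed connect_sym_del x); rewrite !inE.
have /comp_closedP[_ clZ] := comp_closedCZ.
apply/subsetP=> y; rewrite inE => cxy.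
by rewrite -(closed_connect clZ cxy) inE.
Qed.

End ClosedSets.

Lemma card_setI_split (T : finType) (X Y W : {set T}) :
  X \subset Y -> #|Y :&: W| = #|X :&: W| + #|(Y :\: X) :&: W|.
Proof.
move=> XY; rewrite -(cardsID X (Y :&: W)) setIAC (setIidPr XY).
by rewrite setDE setDE setIAC.
Qed.

Lemma card_bipartition (T : finType) (e : rel T) (A B X : {set T}) :
  bipartition e A B -> #|X| = #|X :&: A| + #|X :&: B|.
Proof.
move=> [AB0 ABT _]; rewrite -(cardsID A X); congr (_ + _).
apply: eq_card => x; rewrite !inE.
move/setP/(_ x): AB0; move/setP/(_ x): ABT.
by rewrite !inE; case: (x \in A); case: (x \in B); case: (x \in X).
Qed.

Lemma exists_subset_card (T : finType) (D : {set T}) k :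
  k <= #|D| -> exists2 S : {set T}, S \subset D & #|S| = k.
Proof.
elim: k => [|k IHk] Hk; first by exists set0; rewrite ?sub0set ?cards0.
have [S SD cS] := IHk (ltnW Hk).
have: S \proper D by rewrite properEcard SD cS Hk.
case/properP=> _ [x xD xS].
exists (x |: S); first by rewrite subUset sub1set xD.
by rewrite cardsU1 xS cS.
Qed.

Section Expansion.

Variables (T : finType) (e : rel T) (A B Z : {set T}).

Lemma nbhd_closed_sub (X S : {set T}) :
  bipartition e A B -> comp_closed e Z X -> S \subset X :&: A ->
  nbhd e S \subset (X :|: Z) :&: B.
Proof.
move=> [AB0 _ bip] /comp_closedP[XZ clX] SXA.
apply/subsetP=> y; rewrite !inE => /existsP[x /andP[xS exy]].
have /setIP[xX xA] := subsetP SXA x xS.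
have yB : y \in B.
  case/orP: (bip _ _ exy) => /andP[] // xB _.
  by move/setP/(_ x): AB0; rewrite !inE xA xB.
rewrite yB andbT; case yZ: (y \in Z); rewrite ?orbT // orbF.
have xZ : x \notin Z by move/subsetP/(_ x xX): XZ; rewrite inE.
by rewrite -(clX x) // /del_rel exy xZ yZ.
Qed.

Lemma expander_closed_piece (R : realFieldType) (eps : R) (X S : {set T}) :
  bip_expander eps e A B -> comp_closed e Z X -> S \subset X :&: A ->
  (#|S|.*2 <= #|A|)%N ->
  ((1 + eps) * #|S|%:R <= #|X :&: B|%:R + #|Z :&: B|%:R :> R)%R.
Proof.
move=> [bipG _ expG] clX SXA S_half.
have SA : S \subset A by apply: subset_trans SXA (subsetIr _ _).
have S_le : (#|S|%:R <= #|A|%:R / 2 :> R)%R.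
  by rewrite ler_pdivlMr // -natrM ler_nat muln2.
apply: le_trans (expG S SA S_le) _; rewrite -natrD ler_nat.
apply: leq_trans (subset_leq_card (nbhd_closed_sub bipG clX SXA)) _.
by rewrite setIUl leq_card_setU.
Qed.

End Expansion.

Section Pieces.

Variables (T : finType) (e : rel T) (Z A : {set T}) (m : nat).
Hypotheses (sym_e : symmetric e) (A_le : (#|A| <= m.*2.+1)%N).

Let small (P : {set T}) := comp_closed e Z P && (#|P :&: A| <= m)%N.

Lemma card_closed_split (P W : {set T}) :
  P \subset ~: Z -> #|P :&: W| + #|(~: Z :\: P) :&: W| + #|Z :&: W| = #|W|.
Proof.
move=> PZ; rewrite -(card_setI_split W PZ) addnC -(cardsID Z W).
by rewrite setDE [W :&: Z]setIC [W :&: ~: Z]setIC.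
Qed.

(* A maximal closed set P with at most m vertices in A either leaves a rest
   with at most m such vertices, or any component C of the rest meeting A
   overflows P :|: C, so that the rest minus C is small again. *)
Lemma closed_pieces_or_giant :
  (exists P1 P2 P3 : {set T},
     [/\ comp_closed e Z P1, comp_closed e Z P2, comp_closed e Z P3,
         [&& #|P1 :&: A| <= m, #|P2 :&: A| <= m & #|P3 :&: A| <= m]%N &
         forall W : {set T},
           #|P1 :&: W| + #|P2 :&: W| + #|P3 :&: W| + #|Z :&: W| = #|W|])
  \/ exists2 x, x \notin Z & (m < #|component e Z x :&: A|)%N.
Proof.
have small0 : small set0 by rewrite /small comp_closed0 set0I cards0.
have [P /andP[clP Pm] Pmax] := arg_maxnP (fun P => #|P :&: A|) small0.
have PZ : P \subset ~: Z by case/comp_closedP: clP.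
set Rs := ~: Z :\: P.
have clR : comp_closed e Z Rs := comp_closedD (comp_closedCZ e Z) clP.
have totP W := card_closed_split W PZ.
have [Rm | mR] := leqP #|Rs :&: A| m.
  left; exists P, Rs, set0; rewrite set0I cards0 comp_closed0 Pm Rm.
  by split=> // W; rewrite set0I cards0 addn0.
have /card_gt0P[x /setIP[xR xA]] : (0 < #|Rs :&: A|)%N.
  exact: leq_ltn_trans mR.
have xZ : x \notin Z by move: xR; rewrite !inE => /andP[].
set C := component e Z x.
have clC : comp_closed e Z C := comp_closed_component sym_e xZ.
have CR : C \subset Rs := component_sub_closed clR xR.
have [Cm | ] := leqP #|C :&: A| m; last by right; exists x.
have PCA : #|(P :|: C) :&: A| = #|P :&: A| + #|C :&: A|.
  rewrite (card_setI_split A (subsetUl P C)) setDUl setDv set0U.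
  suff /setDidPl -> : [disjoint C & P] by [].
  by rewrite disjoints_subset (subset_trans CR) ?subsetDr.
have CA_gt0 : (0 < #|C :&: A|)%N.
  by apply/card_gt0P; exists x; rewrite inE xA andbT inE connect0.
have overflow : (m < #|P :&: A| + #|C :&: A|)%N.
  rewrite ltnNge; apply/negP=> PCm.
  have := Pmax (P :|: C); rewrite /small comp_closedU // PCA PCm /geq.
  by move=> /(_ isT); lia.
have totR W := card_setI_split W CR.
left; exists P, C, (Rs :\: C); rewrite Pm Cm.
split=> //; first exact: comp_closedD.
  by have := totP A; rewrite /= totR; lia.
by move=> W; rewrite -(totP W) totR addnA.
Qed.

End Pieces.

Local Open Scope ring_scope.

Lemma three_pieces_bound (R : realFieldType) (eps : R)
    (n zA zB a1 a2 a3 b1 b2 b3 : nat) :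
  0 < eps -> eps <= 1 ->
  (a1 + a2 + a3 + zA)%N = n -> (b1 + b2 + b3 + zB)%N = n ->
  (1 + eps) * a1%:R <= b1%:R + zB%:R ->
  (1 + eps) * a2%:R <= b2%:R + zB%:R ->
  (1 + eps) * a3%:R <= b3%:R + zB%:R ->
  eps / 2 * (n%:R - 1) - 1 <= (zA + zB)%N%:R.
Proof.
move=> e0 e1 /(congr1 (GRing.natmul (1 : R))) Ea.
move=> /(congr1 (GRing.natmul (1 : R))) Eb; rewrite !natrD in Ea Eb *.
have zA0 : 0 <= zA%:R :> R by [].
have zB0 : 0 <= zB%:R :> R by [].
have : 0 <= (1 - eps) * zA%:R by apply: mulr_ge0; rewrite ?subr_ge0.
nra.
Qed.

Lemma giant_piece_bound (R : realFieldType) (eps : R) (n m zA zB a b : nat) :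
  0 < eps -> (n <= m.*2.+1)%N -> (m < a)%N -> (a + b <= n)%N ->
  (1 + eps) * m%:R <= b%:R + zB%:R ->
  eps / 2 * (n%:R - 1) - 1 <= (zA + zB)%N%:R.
Proof.
move=> e0 n_le m_lt ab_le h.
have : n%:R <= (m.*2.+1)%:R :> R by rewrite ler_nat.
have : m.+1%:R <= a%:R :> R by rewrite ler_nat.
have : (a + b)%:R <= n%:R :> R by rewrite ler_nat.
rewrite -[m.+1]addn1 -[m.*2.+1]addn1 -addnn !natrD => {n_le m_lt ab_le}.
have : 0 <= zA%:R :> R by [].
have : 0 <= m%:R :> R by [].
nra.
Qed.

Theorem lemma14 (R : realFieldType) (eps : R) (T : finType) (e : rel T)
    (A B : {set T}) (n : nat) (Z : {set T}) :
  0 < eps -> eps <= 1 ->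
  simple_graph e ->
  bip_expander eps e A B ->
  #|T| = (2 * n)%N ->
  separator e Z ->
  eps / 2 * (n%:R - 1) - 1 <= #|Z|%:R.
Proof.
move=> e0 e1 [sym_e _] expG cardT sepZ.
have [bipG cardAB _] := expG.
have cardA : #|A| = n.
  have := card_bipartition [set: T] bipG.
  by rewrite cardsT !setTI cardT cardAB; lia.
set m := n./2.
have /andP[m_le m_ge] : (m.*2 <= n <= m.*2.+1)%N.
  by rewrite /m; have := odd_double_half n; case: (odd n) => /=; lia.
have piece (X S : {set T}) :
    comp_closed e Z X -> S \subset X :&: A -> (#|S| <= m)%N ->
    (1 + eps) * #|S|%:R <= #|X :&: B|%:R + #|Z :&: B|%:R.
  move=> clX SXA Sm; apply: expander_closed_piece expG clX SXA _.
  by rewrite cardA; apply: leq_trans m_le; rewrite leq_double.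
rewrite (card_bipartition Z bipG).
have A_le : (#|A| <= m.*2.+1)%N by rewrite cardA.
case: (closed_pieces_or_giant Z sym_e A_le) => [[P1 [P2 [P3]]] | [x xZ giant]].
  case=> cl1 cl2 cl3 /and3P[m1 m2 m3] tot.
  apply: (three_pieces_bound e0 e1 _ _ (piece _ _ cl1 (subxx _) m1)
            (piece _ _ cl2 (subxx _) m2) (piece _ _ cl3 (subxx _) m3)).
    by rewrite tot cardA.
  by rewrite tot -cardAB cardA.
set C := component e Z x in giant *.
have [S SCA cardS] := exists_subset_card (ltnW giant).
have := piece C S (comp_closed_component sym_e xZ) SCA; rewrite cardS.
move=> /(_ (leqnn m)); apply: (giant_piece_bound #|Z :&: A| e0 m_ge giant).
have := sepZ x xZ; rewrite -/C cardT (card_bipartition C bipG); lia.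
Qed.
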